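(* Let $\Gamma$, $\Delta$, $\Sigma$ be finite multisets of formulas not containing $\ast$. If the multi-succedent sequent $\Gamma, \Delta \Rightarrow \Sigma$ is derivable in classical propositional logic (i.e. the conjunction of $\Gamma,\Delta$ classically entails the disjunction of $\Sigma$), then \[ \Pi_V, \Gamma, \lnot_\ast\lnot\Delta, \lnot_\ast\Sigma \vdash_i \ast \] for every set $V$ of propositional variables containing \[ (\mathcal{V}^-(\Gamma,\Delta) \cup \mathcal{V}^+(\Sigma)) \cap (\mathcal{V}^+_{ns}(\Gamma) \cup \mathcal{V}^+(\Delta) \cup \mathcal{V}^-(\Sigma)). \] Here $\lnot_\ast\lnot\Delta$ denotes the multiset $\lnot_\ast\lnot D_1,\ldots,\lnot_\ast\lnot D_n$ if $\Delta = D_1,\ldots,D_n$, and $\lnot_\ast\Sigma$ denotes $\lnot_\ast S_1,\ldots,\lnot_\ast S_m$ if $\Sigma=S_1,\ldots,S_m$.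
   Context: Formulas are built from propositional variables and $\bot$ using $\land$, $\lor$, $\to$; $\lnot A$ abbreviates $A \to \bot$. $\ast$ is a distinguished propositional letter (placeholder), and $\lnot_\ast A$ abbreviates $A \to \ast$. For a set $V$ of propositional variables, $\Pi_V = \{ p \lor \lnot p \mid p \in V\}$. $\vdash_i$ denotes derivability in intuitionistic propositional logic (e.g. in the sequent calculus G3ip). The sets $\mathcal{V}^+(A)$, $\mathcal{V}^-(A)$ of variables occurring positively, negatively in $A$ are defined simultaneously by: $\mathcal{V}^+(p)=\{p\}$, $\mathcal{V}^+(\bot)=\emptyset$, $\mathcal{V}^+(A\land B)=\mathcal{V}^+(A\lor B)=\mathcal{V}^+(A)\cup\mathcal{V}^+(B)$, $\mathcal{V}^+(A\to B)=\mathcal{V}^-(A)\cup\mathcal{V}^+(B)$; $\mathcal{V}^-(p)=\mathcal{V}^-(\bot)=\emptyset$, $\mathcal{V}^-(A\land B)=\mathcal{V}^-(A\lor B)=\mathcal{V}^-(A)\cup\mathcal{V}^-(B)$, $\mathcal{V}^-(A\to B)=\mathcal{V}^+(A)\cup\mathcal{V}^-(B)$. The set $\mathcal{V}^+_{ns}(A)$ of variables occurring non-strictly positively is defined by $\mathcal{V}^+_{ns}(p)=\mathcal{V}^+_{ns}(\bot)=\emptyset$, $\mathcal{V}^+_{ns}(A\land B)=\mathcal{V}^+_{ns}(A\lor B)=\mathcal{V}^+_{ns}(A)\cup\mathcal{V}^+_{ns}(B)$, $\mathcal{V}^+_{ns}(A\to B)=\mathcal{V}^-(A)\cup\mathcal{V}^+_{ns}(B)$.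 For a finite multiset $\Gamma$, $\mathcal{V}^+(\Gamma)=\bigcup_{A\in\Gamma}\mathcal{V}^+(A)$, and similarly for $\mathcal{V}^-$ and $\mathcal{V}^+_{ns}$; $\mathcal{V}^-(\Gamma,\Delta)$ is $\mathcal{V}^-$ of the multiset union. *)

From Stdlib Require Import List Bool.
Import ListNotations.

Inductive form : Type :=
| Var : nat -> form
| Bot : form
| And : form -> form -> form
| Or  : form -> form -> form
| Imp : form -> form -> form.

Definition star_var : nat := 0.
Definition star : form := Var star_var.

Definition Neg (A : form) : form := Imp A Bot.
Definition NegS (A : form) : form := Imp A star.

Definition Pi (V : list nat) : list form :=
  map (fun p => Or (Var p) (Neg (Var p))) V.

Fixpoint vars (A : form) : list nat :=
  match A with
  | Var p => [p]
  | Bot => []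
  | And B C | Or B C | Imp B C => vars B ++ vars C
  end.

Fixpoint vpos (A : form) : list nat :=
  match A with
  | Var p => [p]
  | Bot => []
  | And B C | Or B C => vpos B ++ vpos C
  | Imp B C => vneg B ++ vpos C
  end
with vneg (A : form) : list nat :=
  match A with
  | Var _ => []
  | Bot => []
  | And B C | Or B C => vneg B ++ vneg C
  | Imp B C => vpos B ++ vneg C
  end.

Fixpoint vnsp (A : form) : list nat :=
  match A with
  | Var _ => []
  | Bot => []
  | And B C | Or B C => vnsp B ++ vnsp C
  | Imp B C => vneg B ++ vnsp C
  end.

Definition vposL (G : list form) : list nat := flat_map vpos G.
Definition vnegL (G : list form) : list nat := flat_map vneg G.
Definition vnspL (G : list form) : list nat := flat_map vnsp G.

(* Intuitionistic propositional derivability (natural deduction,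
   equivalent to G3ip); contexts are finite multisets represented by lists. *)
Inductive ider : list form -> form -> Prop :=
| ider_ax   : forall G A, In A G -> ider G A
| ider_botE : forall G A, ider G Bot -> ider G A
| ider_andI : forall G A B, ider G A -> ider G B -> ider G (And A B)
| ider_andE1 : forall G A B, ider G (And A B) -> ider G A
| ider_andE2 : forall G A B, ider G (And A B) -> ider G B
| ider_orI1 : forall G A B, ider G A -> ider G (Or A B)
| ider_orI2 : forall G A B, ider G B -> ider G (Or A B)
| ider_orE  : forall G A B C, ider G (Or A B) -> ider (A :: G) C ->
                ider (B :: G) C -> ider G C
| ider_impI : forall G A B, ider (A :: G) B -> ider G (Imp A B)
| ider_impE : forall G A B, ider G (Imp A B) -> ider G A -> ider G B.

Fixpoint eval (v : nat -> bool) (A : form) : bool :=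
  match A with
  | Var p => v p
  | Bot => false
  | And B C => eval v B && eval v C
  | Or B C => eval v B || eval v C
  | Imp B C => implb (eval v B) (eval v C)
  end.

Definition cder (G S : list form) : Prop :=
  forall v : nat -> bool,
    (forall A, In A G -> eval v A = true) -> exists B, In B S /\ eval v B = true.

(* Induct on the size of the three-part sequent Γ; Δ ⇒ Σ, decomposing a
   non-atomic formula by an invertible rule of a classical sequent calculus
   whose premises again have the three-part shape: an implication A → B of Γ
   or of Δ sends A to Σ, and an implication of Σ sends its antecedent to Δ.
   Each rule is admissible for the translation Π_V, Γ, ¬∗¬Δ, ¬∗Σ ⊢ ∗, and
   every variable critical for a premise is critical for the conclusion.
   When only atoms remain, classical validity yields an atom q of Σ that
   also occurs in Γ or in Δ.  In Γ, ¬∗q gives ∗ at once; in Δ, q is critical,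
   so q ∨ ¬q ∈ Π_V lets us choose between ¬∗q and ¬∗¬q. *)

From Stdlib Require Import List Bool Arith Lia.
Import ListNotations.

Lemma ider_weaken G G' A : ider G A -> incl G G' -> ider G' A.
Proof.
  intros H; revert G'.
  induction H; intros G' HG.
  - now apply ider_ax, HG.
  - now apply ider_botE, IHider.
  - now apply ider_andI; [apply IHider1 | apply IHider2].
  - now eapply ider_andE1, IHider.
  - now eapply ider_andE2, IHider.
  - now apply ider_orI1, IHider.
  - now apply ider_orI2, IHider.
  - eapply ider_orE; [now apply IHider1 | apply IHider2 | apply IHider3];
      now apply incl_cons; [left | apply incl_tl].
  - apply ider_impI, IHider.
    now apply incl_cons; [left | apply incl_tl].
  - now eapply ider_impE; [apply IHider1 | apply IHider2].
Qed.

Lemma ider_cons G A B : ider G A -> ider (B :: G) A.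
Proof. intros H; apply (ider_weaken G); [exact H | apply incl_tl, incl_refl]. Qed.

Lemma ider_hyp G A : ider (A :: G) A.
Proof. apply ider_ax; left; reflexivity. Qed.

Lemma Forall_ider_cons G B L : Forall (ider G) L -> Forall (ider (B :: G)) L.
Proof. apply Forall_impl; intros A; apply ider_cons. Qed.

Definition translation (V : list nat) (Gam Del Sig : list form) : list form :=
  Pi V ++ Gam ++ map (fun D => NegS (Neg D)) Del ++ map NegS Sig.

(* Quantifying over every context [G] that derives the translation makes the
   rules below closed under adding hypotheses to [G]. *)
Definition star_valid (V : list nat) (Gam Del Sig : list form) : Prop :=
  forall G, Forall (ider G) (translation V Gam Del Sig) -> ider G star.

Lemma translation_cons_l V G X Gam Del Sig :
  Forall (ider G) (translation V (X :: Gam) Del Sig) <->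
  ider G X /\ Forall (ider G) (translation V Gam Del Sig).
Proof. unfold translation; rewrite ?Forall_app, Forall_cons_iff, ?Forall_app; tauto. Qed.

Lemma translation_cons_m V G X Gam Del Sig :
  Forall (ider G) (translation V Gam (X :: Del) Sig) <->
  ider G (NegS (Neg X)) /\ Forall (ider G) (translation V Gam Del Sig).
Proof.
  unfold translation; cbn [map].
  rewrite ?Forall_app, Forall_cons_iff, ?Forall_app; tauto.
Qed.

Lemma translation_cons_r V G X Gam Del Sig :
  Forall (ider G) (translation V Gam Del (X :: Sig)) <->
  ider G (NegS X) /\ Forall (ider G) (translation V Gam Del Sig).
Proof.
  unfold translation; cbn [map].
  rewrite ?Forall_app, Forall_cons_iff, ?Forall_app; tauto.
Qed.

Lemma star_valid_incl V Gam Del Sig Gam' Del' Sig' :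
  incl Gam' Gam -> incl Del' Del -> incl Sig' Sig ->
  star_valid V Gam' Del' Sig' -> star_valid V Gam Del Sig.
Proof.
  intros HG HD HS H G HT; apply H.
  apply (incl_Forall (l1 := translation V Gam Del Sig)); [| exact HT].
  unfold translation.
  repeat apply incl_app_app; auto using incl_refl, incl_map.
Qed.

Lemma incl_middle {T : Type} (x : T) l1 l2 : incl (x :: l1 ++ l2) (l1 ++ x :: l2).
Proof. intros y; cbn; rewrite !in_app_iff; cbn; tauto. Qed.

Section Rules.

Variable V : list nat.

Lemma star_valid_bot_l Gam Del Sig : star_valid V (Bot :: Gam) Del Sig.
Proof. intros G HG; apply translation_cons_l in HG as [Hbot _]; now apply ider_botE. Qed.

Lemma star_valid_and_l A B Gam Del Sig :
  star_valid V (A :: B :: Gam) Del Sig -> star_valid V (And A B :: Gam) Del Sig.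
Proof.
  intros H G HG; apply translation_cons_l in HG as [HAB HG].
  apply H, translation_cons_l; split; [eapply ider_andE1; exact HAB |].
  apply translation_cons_l; split; [eapply ider_andE2; exact HAB | exact HG].
Qed.

Lemma star_valid_or_l A B Gam Del Sig :
  star_valid V (A :: Gam) Del Sig -> star_valid V (B :: Gam) Del Sig ->
  star_valid V (Or A B :: Gam) Del Sig.
Proof.
  intros HA HB G HG; apply translation_cons_l in HG as [HAB HG].
  apply (ider_orE G A B); [exact HAB | apply HA | apply HB];
    apply translation_cons_l; split; auto using ider_hyp, Forall_ider_cons.
Qed.

Lemma star_valid_imp_l A B Gam Del Sig :
  star_valid V (B :: Gam) Del Sig -> star_valid V Gam Del (A :: Sig) ->
  star_valid V (Imp A B :: Gam) Del Sig.
Proof.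
  intros HB HA G HG; apply translation_cons_l in HG as [HAB HG].
  apply HA, translation_cons_r; split; [| exact HG].
  apply ider_impI, HB, translation_cons_l; split; [| now apply Forall_ider_cons].
  apply (ider_impE _ A); [now apply ider_cons | apply ider_hyp].
Qed.

Lemma star_valid_bot_m Gam Del Sig : star_valid V Gam (Bot :: Del) Sig.
Proof.
  intros G HG; apply translation_cons_m in HG as [Hbot _].
  apply (ider_impE _ _ _ Hbot), ider_impI, ider_hyp.
Qed.

Lemma star_valid_and_m A B Gam Del Sig :
  star_valid V Gam (A :: B :: Del) Sig -> star_valid V Gam (And A B :: Del) Sig.
Proof.
  intros H G HG; apply translation_cons_m in HG as [HAB HG].
  apply H, translation_cons_m; split; [| apply translation_cons_m; split; [| exact HG]];
    apply ider_impI, (ider_impE _ _ _ (ider_cons _ _ _ HAB)), ider_impI;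
    apply (ider_impE _ _ _ (ider_cons _ _ _ (ider_hyp _ _))).
  - eapply ider_andE1, ider_hyp.
  - eapply ider_andE2, ider_hyp.
Qed.

Lemma star_valid_or_m A B Gam Del Sig :
  star_valid V Gam (A :: Del) Sig -> star_valid V Gam (B :: Del) Sig ->
  star_valid V Gam (Or A B :: Del) Sig.
Proof.
  intros HA HB G HG; apply translation_cons_m in HG as [HAB HG].
  apply HA, translation_cons_m; split; [| exact HG].
  apply ider_impI, HB, translation_cons_m; split; [| now apply Forall_ider_cons].
  apply ider_impI, (ider_impE _ _ _ (ider_cons _ _ _ (ider_cons _ _ _ HAB))), ider_impI.
  apply (ider_orE _ A B); [apply ider_hyp | |].
  - apply (ider_impE _ A); [do 3 apply ider_cons | ]; apply ider_hyp.
  - apply (ider_impE _ B); [do 2 apply ider_cons | ]; apply ider_hyp.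
Qed.

Lemma star_valid_imp_m A B Gam Del Sig :
  star_valid V Gam (B :: Del) Sig -> star_valid V Gam Del (A :: Sig) ->
  star_valid V Gam (Imp A B :: Del) Sig.
Proof.
  intros HB HA G HG; apply translation_cons_m in HG as [HAB HG].
  apply HA, translation_cons_r; split; [| exact HG].
  apply ider_impI, HB, translation_cons_m; split; [| now apply Forall_ider_cons].
  apply ider_impI, (ider_impE _ _ _ (ider_cons _ _ _ (ider_cons _ _ _ HAB))), ider_impI.
  apply (ider_impE _ B); [apply ider_cons, ider_hyp |].
  apply (ider_impE _ A); [apply ider_hyp | do 2 apply ider_cons; apply ider_hyp].
Qed.

Lemma star_valid_bot_r Gam Del Sig :
  star_valid V Gam Del Sig -> star_valid V Gam Del (Bot :: Sig).
Proof. intros H G HG; apply translation_cons_r in HG as [_ HG]; exact (H G HG). Qed.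

Lemma star_valid_and_r A B Gam Del Sig :
  star_valid V Gam Del (A :: Sig) -> star_valid V Gam Del (B :: Sig) ->
  star_valid V Gam Del (And A B :: Sig).
Proof.
  intros HA HB G HG; apply translation_cons_r in HG as [HAB HG].
  apply HA, translation_cons_r; split; [| exact HG].
  apply ider_impI, HB, translation_cons_r; split; [| now apply Forall_ider_cons].
  apply ider_impI, (ider_impE _ _ _ (ider_cons _ _ _ (ider_cons _ _ _ HAB))).
  apply ider_andI; [apply ider_cons |]; apply ider_hyp.
Qed.

Lemma star_valid_or_r A B Gam Del Sig :
  star_valid V Gam Del (A :: B :: Sig) -> star_valid V Gam Del (Or A B :: Sig).
Proof.
  intros H G HG; apply translation_cons_r in HG as [HAB HG].
  apply H, translation_cons_r; split; [| apply translation_cons_r; split; [| exact HG]];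
    apply ider_impI, (ider_impE _ _ _ (ider_cons _ _ _ HAB)).
  - apply ider_orI1, ider_hyp.
  - apply ider_orI2, ider_hyp.
Qed.

Lemma star_valid_imp_r A B Gam Del Sig :
  star_valid V Gam (A :: Del) (B :: Sig) -> star_valid V Gam Del (Imp A B :: Sig).
Proof.
  intros H G HG; apply translation_cons_r in HG as [HAB HG].
  apply H, translation_cons_m; split; [| apply translation_cons_r; split; [| exact HG]];
    apply ider_impI, (ider_impE _ _ _ (ider_cons _ _ _ HAB)), ider_impI.
  - apply ider_botE, (ider_impE _ A); [apply ider_cons |]; apply ider_hyp.
  - apply ider_cons, ider_hyp.
Qed.

Lemma star_valid_axiom_l q Gam Del Sig :
  star_valid V (Var q :: Gam) Del (Var q :: Sig).
Proof.
  intros G HG; apply translation_cons_l in HG as [Hq HG].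
  apply translation_cons_r in HG as [Hnq _].
  exact (ider_impE _ _ _ Hnq Hq).
Qed.

Lemma star_valid_axiom_m q Gam Del Sig :
  In q V -> star_valid V Gam (Var q :: Del) (Var q :: Sig).
Proof.
  intros HqV G HG; apply translation_cons_m in HG as [Hnnq HG].
  apply translation_cons_r in HG as [Hnq HG].
  assert (Hem : ider G (Or (Var q) (Neg (Var q)))).
  { unfold translation in HG; apply Forall_app in HG as [HPi _].
    apply (proj1 (Forall_forall _ _) HPi).
    exact (in_map (fun p => Or (Var p) (Neg (Var p))) V q HqV). }
  apply (ider_orE _ _ _ _ Hem).
  - apply (ider_impE _ (Var q)); [apply ider_cons, Hnq | apply ider_hyp].
  - apply (ider_impE _ (Neg (Var q))); [apply ider_cons, Hnnq | apply ider_hyp].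
Qed.

End Rules.

Definition entails (L S : list form) : Prop :=
  forall v, forallb (eval v) L = true -> existsb (eval v) S = true.

Lemma entails_of_cder L S : cder L S -> entails L S.
Proof.
  intros H v Hv; rewrite forallb_forall in Hv.
  destruct (H v Hv) as (B & HB & HBv).
  apply existsb_exists; eauto.
Qed.

Definition critical (Gam Del Sig : list form) (p : nat) : Prop :=
  (In p (vnegL (Gam ++ Del)) \/ In p (vposL Sig)) /\
  (In p (vnspL Gam) \/ In p (vposL Del) \/ In p (vnegL Sig)).

Definition covers (V : list nat) (Gam Del Sig : list form) : Prop :=
  forall p, critical Gam Del Sig p -> In p V.

Definition embeddable (V : list nat) (Gam Del Sig : list form) : Prop :=
  entails (Gam ++ Del) Sig -> covers V Gam Del Sig -> star_valid V Gam Del Sig.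

Fixpoint form_size (A : form) : nat :=
  match A with
  | Var _ | Bot => 1
  | And B C | Or B C | Imp B C => S (form_size B + form_size C)
  end.

Fixpoint list_size (L : list form) : nat :=
  match L with
  | [] => 0
  | A :: L' => form_size A + list_size L'
  end.

Lemma list_size_app L1 L2 : list_size (L1 ++ L2) = list_size L1 + list_size L2.
Proof.
  induction L1 as [| A L1 IH]; cbn; [reflexivity | rewrite IH; apply Nat.add_assoc].
Qed.

Definition seq_size (Gam Del Sig : list form) : nat :=
  list_size Gam + list_size Del + list_size Sig.

Definition is_var (A : form) : bool := match A with Var _ => true | _ => false end.

Lemma vars_or_split (L : list form) :
  Forall (fun A => is_var A = true) L \/
  exists L1 X L2, L = L1 ++ X :: L2 /\ is_var X = false.
Proof.
  destruct (Forall_Exists_dec _ (fun A => bool_dec (is_var A) true) L) as [H | H];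
    [now left | right].
  apply Exists_exists in H as (X & HX & HnX).
  apply in_split in HX as (L1 & L2 & ->).
  exists L1, X, L2; split; [reflexivity | now apply not_true_is_false].
Qed.

Definition form_eq_dec (A B : form) : {A = B} + {A <> B}.
Proof. decide equality; apply Nat.eq_dec. Defined.

Lemma embeddable_atoms V Gam Del Sig :
  Forall (fun A => is_var A = true) (Gam ++ Del) ->
  Forall (fun A => is_var A = true) Sig ->
  embeddable V Gam Del Sig.
Proof.
  intros HGD HS Hsem Hcov.
  set (v := fun p => if in_dec form_eq_dec (Var p) (Gam ++ Del) then true else false).
  assert (Hv : forallb (eval v) (Gam ++ Del) = true).
  { apply forallb_forall; intros X HX.
    rewrite Forall_forall in HGD; specialize (HGD X HX).
    destruct X as [q | | | |]; try discriminate.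
    cbn; unfold v; destruct in_dec; [reflexivity | contradiction]. }
  apply Hsem, existsb_exists in Hv as (Y & HY & HYv).
  rewrite Forall_forall in HS; specialize (HS Y HY).
  destruct Y as [r | | | |]; try discriminate.
  cbn in HYv; unfold v in HYv; destruct in_dec as [Hr |]; [| discriminate].
  apply in_app_or in Hr as [Hr | Hr].
  - apply star_valid_incl with (Gam' := Var r :: Gam) (Del' := Del) (Sig' := Var r :: Sig);
      auto using incl_cons, incl_refl, star_valid_axiom_l.
  - apply star_valid_incl with (Gam' := Gam) (Del' := Var r :: Del) (Sig' := Var r :: Sig);
      auto using incl_cons, incl_refl.
    apply star_valid_axiom_m, Hcov; split; right.
    + apply in_flat_map; exists (Var r); split; [exact HY | left; reflexivity].
    + left; apply in_flat_map; exists (Var r); split; [exact Hr | left; reflexivity].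
Qed.

Ltac inherit_entails Hsem :=
  let v := fresh "v" in
  intros v; specialize (Hsem v); revert Hsem;
  rewrite ?forallb_app, ?existsb_app; cbn [forallb existsb eval];
  rewrite ?forallb_app, ?existsb_app;
  repeat match goal with
  | |- context [forallb (eval v) ?l] => destruct (forallb (eval v) l)
  | |- context [existsb (eval v) ?l] => destruct (existsb (eval v) l)
  | |- context [eval v ?A] => destruct (eval v A)
  end; cbn; intuition congruence.

Ltac inherit_covers Hcov :=
  let p := fresh "p" in let Hp := fresh "Hp" in
  intros p Hp; apply Hcov; revert Hp;
  unfold critical, vnegL, vposL, vnspL; rewrite ?flat_map_app;
  cbn [flat_map vpos vneg vnsp]; rewrite ?flat_map_app, ?in_app_iff; tauto.

Ltac seq_size_decreases :=
  unfold seq_size; rewrite ?list_size_app; cbn; rewrite ?list_size_app; lia.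

Ltac premise IH Hsem Hcov :=
  apply IH; [seq_size_decreases | inherit_entails Hsem | inherit_covers Hcov].

Section Decomposition.

Variables (V : list nat) (Gam Del Sig : list form).

Hypothesis IH : forall Gam' Del' Sig',
  seq_size Gam' Del' Sig' < seq_size Gam Del Sig -> embeddable V Gam' Del' Sig'.

Lemma embeddable_split_l Gam1 X Gam2 :
  Gam = Gam1 ++ X :: Gam2 -> is_var X = false -> embeddable V Gam Del Sig.
Proof.
  intros -> HX Hsem Hcov.
  apply star_valid_incl with (Gam' := X :: Gam1 ++ Gam2) (Del' := Del) (Sig' := Sig);
    auto using incl_middle, incl_refl.
  destruct X as [q | | A B | A B | A B]; [discriminate | apply star_valid_bot_l | | |].
  - apply star_valid_and_l; premise IH Hsem Hcov.
  - apply star_valid_or_l; premise IH Hsem Hcov.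
  - apply star_valid_imp_l; premise IH Hsem Hcov.
Qed.

Lemma embeddable_split_m Del1 X Del2 :
  Del = Del1 ++ X :: Del2 -> is_var X = false -> embeddable V Gam Del Sig.
Proof.
  intros -> HX Hsem Hcov.
  apply star_valid_incl with (Gam' := Gam) (Del' := X :: Del1 ++ Del2) (Sig' := Sig);
    auto using incl_middle, incl_refl.
  destruct X as [q | | A B | A B | A B]; [discriminate | apply star_valid_bot_m | | |].
  - apply star_valid_and_m; premise IH Hsem Hcov.
  - apply star_valid_or_m; premise IH Hsem Hcov.
  - apply star_valid_imp_m; premise IH Hsem Hcov.
Qed.

Lemma embeddable_split_r Sig1 X Sig2 :
  Sig = Sig1 ++ X :: Sig2 -> is_var X = false -> embeddable V Gam Del Sig.
Proof.
  intros -> HX Hsem Hcov.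
  apply star_valid_incl with (Gam' := Gam) (Del' := Del) (Sig' := X :: Sig1 ++ Sig2);
    auto using incl_middle, incl_refl.
  destruct X as [q | | A B | A B | A B]; [discriminate | | | |].
  - apply star_valid_bot_r; premise IH Hsem Hcov.
  - apply star_valid_and_r; premise IH Hsem Hcov.
  - apply star_valid_or_r; premise IH Hsem Hcov.
  - apply star_valid_imp_r; premise IH Hsem Hcov.
Qed.

End Decomposition.

Lemma embeddable_all V Gam Del Sig : embeddable V Gam Del Sig.
Proof.
  remember (seq_size Gam Del Sig) as n eqn:Hn; revert Gam Del Sig Hn.
  induction n as [n IH] using lt_wf_ind; intros Gam Del Sig ->.
  assert (IH' : forall Gam' Del' Sig', seq_size Gam' Del' Sig' < seq_size Gam Del Sig ->
            embeddable V Gam' Del' Sig') by (intros; eapply IH; eauto).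
  destruct (vars_or_split Gam) as [HG | (Gam1 & X & Gam2 & -> & HX)];
    [| exact (embeddable_split_l _ _ _ _ IH' _ _ _ eq_refl HX)].
  destruct (vars_or_split Del) as [HD | (Del1 & X & Del2 & -> & HX)];
    [| exact (embeddable_split_m _ _ _ _ IH' _ _ _ eq_refl HX)].
  destruct (vars_or_split Sig) as [HS | (Sig1 & X & Sig2 & -> & HX)];
    [| exact (embeddable_split_r _ _ _ _ IH' _ _ _ eq_refl HX)].
  exact (embeddable_atoms V Gam Del Sig (proj2 (Forall_app _ _ _) (conj HG HD)) HS).
Qed.

Theorem proposition3 (Gamma Delta Sigma : list form) (V : list nat) :
  (forall A, In A (Gamma ++ Delta ++ Sigma) -> ~ In star_var (vars A)) ->
  cder (Gamma ++ Delta) Sigma ->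
  (forall p,
      (In p (vnegL (Gamma ++ Delta)) \/ In p (vposL Sigma)) ->
      (In p (vnspL Gamma) \/ In p (vposL Delta) \/ In p (vnegL Sigma)) ->
      In p V) ->
  ider (Pi V ++ Gamma ++ map (fun D => NegS (Neg D)) Delta ++ map NegS Sigma) star.
Proof.
  intros _ Hcder Hcrit.
  apply (embeddable_all V Gamma Delta Sigma).
  - now apply entails_of_cder.
  - intros p [Hp1 Hp2]; exact (Hcrit p Hp1 Hp2).
  - apply Forall_forall; intros A HA; now apply ider_ax.
Qed.
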